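(* The logic $\mathrm{LTL}[\mathsf{F}]$ can be exponentially more succinct than $\mathsf{F}(\mathrm{LTL}[\mathsf{Y},\mathsf{wY},\mathsf{O},\mathsf{H}])$ (over finite traces). That is, there exist finite sets of atomic propositions $AP_n$ and languages $\mathcal{L}_n\subseteq(2^{AP_n})^+$, $n\ge 1$, such that for every $n\ge1$: (i) there is $\phi\in\mathrm{LTL}[\mathsf{F}]$ with $\mathcal{L}(\phi)=\mathcal{L}_n$ and $\mathrm{size}(\phi)$ bounded by a polynomial in $n$; and (ii) every $\psi\in\mathsf{F}(\mathrm{LTL}[\mathsf{Y},\mathsf{wY},\mathsf{O},\mathsf{H}])$ with $\mathcal{L}(\psi)=\mathcal{L}_n$ has $\mathrm{size}(\psi)\in 2^{\Omega(n)}$.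
   Context: Let $AP$ be a finite set of atomic propositions and $\Sigma=2^{AP}$. Formulae (in negation normal form) are generated by $\phi ::= p \mid \neg p \mid \phi\lor\phi\mid\phi\land\phi\mid \mathsf{X}\phi\mid\mathsf{wX}\phi\mid\mathsf{F}\phi\mid\mathsf{G}\phi\mid\mathsf{Y}\phi\mid\mathsf{wY}\phi\mid\mathsf{O}\phi\mid\mathsf{H}\phi$ with $p\in AP$. For a finite non-empty trace $\sigma=w_0\cdots w_m\in\Sigma^+$ ($|\sigma|=m+1$, $\sigma[i]=w_i$) and $0\le i<|\sigma|$: $\sigma,i\models p$ iff $p\in\sigma[i]$; $\sigma,i\models\neg p$ iff $p\notin\sigma[i]$; $\lor,\land$ as usual; $\sigma,i\models\mathsf{X}\phi$ iff $i+1<|\sigma|$ and $\sigma,i+1\models\phi$; $\sigma,i\models\mathsf{wX}\phi$ iff $i+1=|\sigma|$ or $\sigma,i+1\models\phi$; $\sigma,i\models\mathsf{F}\phi$ iff $\sigma,j\models\phi$ for some $i\le j<|\sigma|$; $\sigma,i\models\mathsf{G}\phi$ iff $\sigma,j\models\phi$ for all $i\le j<|\sigma|$; $\sigma,i\models\mathsf{Y}\phi$ iff $i>0$ and $\sigma,i-1\models\phi$; $\sigma,i\models\mathsf{wY}\phi$ iff $i=0$ or $\sigma,i-1\models\phi$; $\sigma,i\models\mathsf{O}\phi$ iff $\sigma,j\models\phi$ for some $0\le j\le i$; $\sigma,i\models\mathsf{H}\phi$ iff $\sigma,j\models\phi$ for all $0\le j\le i$. $\sigma\models\phi$ means $\sigma,0\models\phi$;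 $\mathcal{L}(\phi)=\{\sigma\in\Sigma^+:\sigma\models\phi\}$. Size: literals have size 1, unary temporal operators add 1, $\mathrm{size}(\phi_1\circ\phi_2)=\mathrm{size}(\phi_1)+\mathrm{size}(\phi_2)+1$ for $\circ\in\{\land,\lor\}$. For a set $S$ of temporal operators, $\mathrm{LTL}[S]$ is the set of formulae whose temporal operators lie in $S$, and $\mathsf{F}(\mathrm{LTL}[S])$ is the set of formulae $\mathsf{F}(\alpha)$ with $\alpha\in\mathrm{LTL}[S]$. *)

From mathcomp Require Import all_boot.
Set Implicit Arguments. Unset Strict Implicit. Unset Printing Implicit Defensive.

(* LTL formulae in negation normal form over atoms of (finite) type A. *)
Inductive form (A : Type) : Type :=
| Atom of A | NAtom of A
| Or of form A & form A | And of form A & form A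
| Xf of form A | WXf of form A | Ff of form A | Gf of form A
| Yf of form A | WYf of form A | Of of form A | Hf of form A.

Arguments Atom {A}. Arguments NAtom {A}. Arguments Or {A}. Arguments And {A}.
Arguments Xf {A}. Arguments WXf {A}. Arguments Ff {A}. Arguments Gf {A}.
Arguments Yf {A}. Arguments WYf {A}. Arguments Of {A}. Arguments Hf {A}.

Section Sem.
Variable A : finType.

(* A trace is a sequence of letters in 2^A; position i is meaningful when i < size s. *)
Fixpoint sat (s : seq {set A}) (phi : form A) (i : nat) : bool :=
  match phi with
  | Atom p => p \in nth set0 s i
  | NAtom p => p \notin nth set0 s i
  | Or f g => sat s f i || sat s g i
  | And f g => sat s f i && sat s g i
  | Xf f => (i.+1 < size s) && sat s f i.+1
  | WXf f => (i.+1 == size s) || sat s f i.+1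
  | Ff f => [exists j : 'I_(size s), (i <= j) && sat s f j]
  | Gf f => [forall j : 'I_(size s), (i <= j) ==> sat s f j]
  | Yf f => (0 < i) && sat s f i.-1
  | WYf f => (i == 0) || sat s f i.-1
  | Of f => [exists j : 'I_i.+1, sat s f j]
  | Hf f => [forall j : 'I_i.+1, sat s f j]
  end.

Definition lang_is (phi : form A) (L : seq {set A} -> Prop) : Prop :=
  forall s : seq {set A}, (0 < size s /\ sat s phi 0) <-> L s.

End Sem.

Fixpoint fsize {A : Type} (phi : form A) : nat :=
  match phi with
  | Atom _ | NAtom _ => 1
  | Or f g | And f g => fsize f + fsize g + 1
  | Xf f | WXf f | Ff f | Gf f | Yf f | WYf f | Of f | Hf f => fsize f + 1
  end.

Fixpoint in_LTL_F {A : Type} (phi : form A) : bool :=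
  match phi with
  | Atom _ | NAtom _ => true
  | Or f g | And f g => in_LTL_F f && in_LTL_F g
  | Ff f => in_LTL_F f
  | _ => false
  end.

Fixpoint in_LTL_past {A : Type} (phi : form A) : bool :=
  match phi with
  | Atom _ | NAtom _ => true
  | Or f g | And f g => in_LTL_past f && in_LTL_past g
  | Yf f | WYf f | Of f | Hf f => in_LTL_past f
  | _ => false
  end.

Definition in_F_past {A : Type} (phi : form A) : bool :=
  match phi with
  | Ff f => in_LTL_past f
  | _ => false
  end.

From mathcomp Require Import all_boot zify.

(* For a past formula alpha, anchor every O- or H-subformula O g / H g of
   alpha at position a + ydepth g, ydepth g being the nesting depth of Y/wY
   in g.  If two positions a, a' of traces u ++ v and u' ++ v with
   a = size u, a' = size u' give the same values to all these anchors, then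
   alpha takes the same values at the positions a + p and a' + p for every
   p >= ydepth alpha: beyond the Y-depth, alpha only looks further back
   through O and H, whose values are updated letter by letter from the anchor.
   As the position grows, an O-anchor can only switch from false to true and
   an H-anchor from true to false, so along an increasing sequence of
   positions the anchors can change at most size alpha - 1 times.

   The language L_n asks for a position whose letter selects, through the
   atoms p_i, a set S of indices such that c_i occurs later for i in S and
   b_i occurs later for i not in S.  Write the 2^n - 1 nonempty sets S_j as
   query letters, separated by blocks of size alpha empty letters.  If the
   anchors agreed after the j-th and the (j+1)-th query, the word ending with
   the (j+1)-th query followed by the answer to S_j, which lies in L_n, would
   transfer its witness for F alpha to the word ending with the j-th query
   followed by that answer, which does not (a witness lying before the answer
   would put an answer-free word into L_n).  Hence size (F alpha) >= 2^n,
   while F /\_i ((p_i \/ F b_i) /\ (~p_i \/ F c_i)) defines L_n in size 10n+10. *)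

Set Implicit Arguments.
Unset Strict Implicit.
Unset Printing Implicit Defensive.

Section Semantics.
Variable A : finType.
Implicit Types (f g : form A) (s u v : seq {set A}) (L : pred (seq {set A})).

Lemma satFP s f i :
  reflect (exists2 t, i <= t < size s & sat s f t) (sat s (Ff f) i).
Proof.
apply: (iffP existsP) => [[t /andP [le_it ft]] | [t /andP [le_it lt_ts] ft]].
  by exists t; rewrite ?le_it ?ltn_ord.
by exists (Ordinal lt_ts); rewrite /= le_it.
Qed.

Lemma satF_size s f i : sat s (Ff f) i -> i < size s.
Proof. by case/satFP => t /andP [le_it /(leq_ltn_trans le_it)]. Qed.

Lemma satOS s g i : sat s (Of g) i.+1 = sat s (Of g) i || sat s g i.+1.
Proof.
apply/existsP/orP => [[j gj] | [/existsP [j gj] | gi]].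
- have /ltnSE := ltn_ord j; rewrite leq_eqVlt => /orP [/eqP <- | lt_ji]; first by right.
  by left; apply/existsP; exists (Ordinal lt_ji).
- by exists (widen_ord (leqnSn _) j).
- by exists ord_max.
Qed.

Lemma satHS s g i : sat s (Hf g) i.+1 = sat s (Hf g) i && sat s g i.+1.
Proof.
apply/forallP/andP => [gall | [/forallP gall gi] j].
  by split; [apply/forallP => j; apply: (gall (widen_ord _ j)) | apply: (gall ord_max)].
have /ltnSE := ltn_ord j; rewrite leq_eqVlt => /orP [/eqP -> // | lt_ji].
exact: (gall (Ordinal lt_ji)).
Qed.

Lemma satO_le s g i j : i <= j -> sat s (Of g) i -> sat s (Of g) j.
Proof.
move=> le_ij /existsP [k gk]; apply/existsP.
by exists (widen_ord (leq_ltn_trans le_ij (ltnSn j)) k).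
Qed.

Lemma satH_le s g i j : i <= j -> sat s (Hf g) j -> sat s (Hf g) i.
Proof.
move=> le_ij /forallP gall; apply/forallP => k.
exact: (gall (widen_ord (leq_ltn_trans le_ij (ltnSn j)) k)).
Qed.

Lemma sat_past_cat f u v i :
  in_LTL_past f -> i < size u -> sat (u ++ v) f i = sat u f i.
Proof.
elim: f i => //= [x|x|f IHf g IHg|f IHf g IHg|f IHf|f IHf|f IHf|f IHf] i pf lt_iu.
- by rewrite nth_cat lt_iu.
- by rewrite nth_cat lt_iu.
- by case/andP: pf => pf pg; rewrite IHf ?IHg.
- by case/andP: pf => pf pg; rewrite IHf ?IHg.
- by rewrite IHf // (leq_ltn_trans (leq_pred i)).
- by rewrite IHf // (leq_ltn_trans (leq_pred i)).
- by apply: eq_existsb => j; rewrite IHf // (leq_trans (ltn_ord j)).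
- by apply: eq_forallb => j; rewrite IHf // (leq_trans (ltn_ord j)).
Qed.

Definition occurs_from (x : A) s t : bool := has (fun X : {set A} => x \in X) (drop t s).

Lemma satF_atom s (x : A) t : sat s (Ff (Atom x)) t = occurs_from x s t.
Proof.
apply/satFP/(has_nthP set0) => [[j /andP [le_tj lt_js] xj] | [j]].
  exists (j - t); rewrite ?nth_drop ?subnKC // size_drop ltn_sub2r //.
  exact: leq_ltn_trans le_tj lt_js.
rewrite size_drop nth_drop => lt_j xj; exists (t + j) => //.
by rewrite leq_addr -ltn_subRL.
Qed.

Lemma occurs_from_free (x : A) s t :
  {in s, forall X : {set A}, x \notin X} -> occurs_from x s t = false.
Proof. by move=> free; apply/negbTE/hasPn => X /mem_drop; apply: free. Qed.

Lemma lang_isF f L :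
  lang_is (Ff f) (fun s => L s) <-> forall s, sat s (Ff f) 0 = L s.
Proof.
split=> fL s; last by rewrite -fL; split=> [[] | fs]; rewrite ?(satF_size fs).
by apply/idP/idP => [fs | /fL []]; [apply/fL; rewrite (satF_size fs) |].
Qed.

End Semantics.

Section PastFormulas.
Variable A : finType.
Implicit Types (f : form A) (s u v w : seq {set A}).

Fixpoint ydepth f : nat :=
  match f with
  | Or f1 f2 | And f1 f2 => maxn (ydepth f1) (ydepth f2)
  | Yf g | WYf g => (ydepth g).+1
  | Of g | Hf g => ydepth g
  | _ => 0
  end.

Fixpoint agree f s a s' a' : bool :=
  match f with
  | Or f1 f2 | And f1 f2 => agree f1 s a s' a' && agree f2 s a s' a'
  | Yf g | WYf g => agree g s a s' a'
  | Of g | Hf g =>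
      agree g s a s' a' && (sat s f (a + ydepth g) == sat s' f (a' + ydepth g))
  | _ => true
  end.

Fixpoint weight f s a : nat :=
  match f with
  | Or f1 f2 | And f1 f2 => weight f1 s a + weight f2 s a
  | Yf g | WYf g => weight g s a
  | Of g => weight g s a + sat s f (a + ydepth g)
  | Hf g => weight g s a + ~~ sat s f (a + ydepth g)
  | _ => 0
  end.

Lemma ydepth_lt_fsize f : ydepth f < fsize f.
Proof. by elim: f => //= *; lia. Qed.

Lemma weight_lt_fsize f s a : weight f s a < fsize f.
Proof. by elim: f => //= *; lia. Qed.

Lemma agree_past_cat f u v u' v' a a' :
  in_LTL_past f -> a + ydepth f < size u -> a' + ydepth f < size u' ->
  agree f (u ++ v) a (u' ++ v') a' = agree f u a u' a'.
Proof.
elim: f => //= [f IHf g IHg|f IHf g IHg|f IHf|f IHf|f IHf|f IHf] pf au au'.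
- by case/andP: pf => pf pg; rewrite IHf ?IHg //; lia.
- by case/andP: pf => pf pg; rewrite IHf ?IHg //; lia.
- by rewrite IHf //; lia.
- by rewrite IHf //; lia.
- by rewrite IHf //; congr (_ && (_ == _)); apply: (@sat_past_cat _ (Of f)).
- by rewrite IHf //; congr (_ && (_ == _)); apply: (@sat_past_cat _ (Hf f)).
Qed.

Lemma sat_agree_cat f u u' v p :
  in_LTL_past f -> agree f (u ++ v) (size u) (u' ++ v) (size u') -> ydepth f <= p ->
  sat (u ++ v) f (size u + p) = sat (u' ++ v) f (size u' + p).
Proof.
elim: f p => // [x|x|f IHf g IHg|f IHf g IHg|f IHf|f IHf|f IHf|f IHf] p pf.
- by rewrite /= !nth_cat !ltnNge !leq_addr /= !addKn.
- by rewrite /= !nth_cat !ltnNge !leq_addr /= !addKn.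
- case/andP: pf => pf pg /andP [af ag]; rewrite geq_max => /andP [df dg].
  by rewrite /= IHf ?IHg.
- case/andP: pf => pf pg /andP [af ag]; rewrite geq_max => /andP [df dg].
  by rewrite /= IHf ?IHg.
- by case: p => // p agf dp; rewrite !addnS /= IHf.
- by case: p => // p agf dp; rewrite !addnS /= IHf.
- case/andP => agf /eqP eq_anchor dp; rewrite -(subnKC dp).
  elim: (p - ydepth f) => [|r IHr]; first by rewrite !addn0.
  by rewrite !addnS !satOS IHr -!addnS IHf // addnS leqW // leq_addr.
- case/andP => agf /eqP eq_anchor dp; rewrite -(subnKC dp).
  elim: (p - ydepth f) => [|r IHr]; first by rewrite !addn0.
  by rewrite !addnS !satHS IHr -!addnS IHf // addnS leqW // leq_addr.
Qed.

Lemma satF_past_agree f u u' v w :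
  in_LTL_past f -> ydepth f <= size v ->
  agree f (u ++ v ++ w) (size u) (u' ++ v ++ w) (size u') ->
  sat (u' ++ v ++ w) (Ff f) 0 -> sat (u' ++ v) (Ff f) 0 || sat (u ++ v ++ w) (Ff f) 0.
Proof.
move=> pf dv ag /satFP [t /andP [_ lt_t] ft].
have [in_u'v | out_u'v] := ltnP t (size (u' ++ v)).
  by apply/orP; left; apply/satFP; exists t; rewrite // -(sat_past_cat w) // -catA.
move: lt_t out_u'v ft; rewrite !size_cat => lt_t out_u'v.
have le_u't : size u' <= t by lia.
rewrite -(subnKC le_u't) -(sat_agree_cat pf ag); last by lia.
move=> ft; apply/orP; right; apply/satFP.
by exists (size u + (t - size u')); rewrite ?size_cat //; lia.
Qed.

Lemma weight_agree f s a a' :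
  a <= a' -> weight f s a + ~~ agree f s a s a' <= weight f s a'.
Proof.
move=> le_aa'.
elim: f => // [f IHf g IHg|f IHf g IHg|f IHf|f IHf] /=.
- by move: IHf IHg; case: (agree f _ _ _ _); case: (agree g _ _ _ _) => /=; lia.
- by move: IHf IHg; case: (agree f _ _ _ _); case: (agree g _ _ _ _) => /=; lia.
- have /(@satO_le _ s f) : a + ydepth f <= a' + ydepth f by rewrite leq_add2r.
  rewrite -/(sat s (Of f) (a + ydepth f)) -/(sat s (Of f) (a' + ydepth f)).
  by move: IHf; case: (sat s (Of f) _); case: (sat s (Of f) _); case: (agree f _ _ _ _);
    rewrite //=; lia.
- have /(@satH_le _ s f) : a + ydepth f <= a' + ydepth f by rewrite leq_add2r.
  rewrite -/(sat s (Hf f) (a + ydepth f)) -/(sat s (Hf f) (a' + ydepth f)).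
  by move: IHf; case: (sat s (Hf f) _); case: (sat s (Hf f) _); case: (agree f _ _ _ _);
    rewrite //=; lia.
Qed.

Lemma disagree_lt_fsize f s (a : nat -> nat) K :
  (forall j, a j <= a j.+1) -> (forall j, j < K -> ~~ agree f s (a j) s (a j.+1)) ->
  K < fsize f.
Proof.
move=> a_incr disagree.
have weight_grows j : j <= K -> weight f s (a 0) + j <= weight f s (a j).
  elim: j => [|j IHj] lt_jK; first by rewrite addn0.
  have := weight_agree f s (a_incr j); rewrite disagree // addnS addn1.
  by move/(leq_trans _); apply; rewrite ltnS IHj // ltnW.
by have := weight_grows K (leqnn K); have := weight_lt_fsize f s (a K); lia.
Qed.

End PastFormulas.

Definition natoms n := n + n + n.

Section Language.
Variable n : nat.
Local Notation AP := 'I_(natoms n).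
Implicit Types (S : {set 'I_n}) (s x : seq {set AP}).

Definition atP (i : 'I_n) : AP := lshift n (lshift n i).
Definition atB (i : 'I_n) : AP := lshift n (rshift n i).
Definition atC (i : 'I_n) : AP := rshift (n + n) i.

Definition query S : {set AP} := atP @: S.
Definition answer S : {set AP} := atC @: S :|: atB @: ~: S.

Lemma atP_inj : injective atP.
Proof. by move=> i j /(congr1 val) /= /val_inj. Qed.

Lemma atB_inj : injective atB.
Proof. by move=> i j /(congr1 val) /= /addnI /val_inj. Qed.

Lemma atC_inj : injective atC.
Proof. by move=> i j /(congr1 val) /= /addnI /val_inj. Qed.

Lemma mem_queryP S i : (atP i \in query S) = (i \in S).
Proof. exact: mem_imset atP_inj. Qed.

Lemma mem_queryB S i : atB i \notin query S.
Proof. by apply/negP => /imsetP [j _ /(congr1 val) /=]; have := ltn_ord j; lia. Qed.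

Lemma mem_queryC S i : atC i \notin query S.
Proof. by apply/negP => /imsetP [j _ /(congr1 val) /=]; have := ltn_ord j; lia. Qed.

Lemma mem_answerP S i : atP i \notin answer S.
Proof.
by rewrite in_setU; apply/norP; split; apply/negP => /imsetP [j _ /(congr1 val) /=];
  have := ltn_ord i; lia.
Qed.

Lemma mem_answerC S i : (atC i \in answer S) = (i \in S).
Proof.
rewrite in_setU (mem_imset _ _ atC_inj) orb_idr // => /imsetP [j _ /(congr1 val) /=].
by have := ltn_ord j; lia.
Qed.

Lemma mem_answerB S i : (atB i \in answer S) = (i \notin S).
Proof.
rewrite in_setU (mem_imset _ _ atB_inj) in_setC orb_idl //.
move=> /imsetP [j _ /(congr1 val) /=].
by have := ltn_ord i; lia.
Qed.


Definition good_at s t : bool :=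
  [forall i, if atP i \in nth set0 s t then occurs_from (atC i) s t
             else occurs_from (atB i) s t].

Definition lang s : bool := [exists t : 'I_(size s), good_at s t].

Definition query_word s : Prop := forall X, X \in s -> exists S, X = query S.

Lemma query_word_notlang s : 0 < n -> query_word s -> ~~ lang s.
Proof.
move=> n_gt0 qs; apply/existsP => -[t /forallP /(_ (Ordinal n_gt0))].
rewrite !occurs_from_free ?if_same // => X /qs [S ->].
  exact: mem_queryB.
exact: mem_queryC.
Qed.

Lemma good_at_answer x S : good_at (x ++ [:: answer S]) (size x) -> S = set0.
Proof.
move=> /forallP good; apply/setP => i; rewrite inE; apply/negbTE.
move: (good i); rewrite nth_cat ltnn subnn (negbTE (mem_answerP _ _)).
by rewrite /occurs_from drop_cat ltnn subnn /= mem_answerB orbF.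
Qed.

Lemma good_at_query x S S' t : query_word x -> t < size x ->
  nth set0 x t = query S' -> good_at (x ++ [:: answer S]) t -> S' = S.
Proof.
move=> qx lt_tx xt /forallP good; apply/setP => i; move: (good i).
rewrite nth_cat lt_tx xt mem_queryP /occurs_from drop_cat lt_tx !has_cat /=.
rewrite -!/(occurs_from _ x t) !occurs_from_free ?mem_answerC ?mem_answerB ?orbF.
- by case: (i \in S'); case: (i \in S).
- by move=> X /qx [S'' ->]; apply: mem_queryB.
- by move=> X /qx [S'' ->]; apply: mem_queryC.
Qed.


Definition subsets : seq {set 'I_n} := enum (predC1 set0).
Definition subset_at j := nth set0 subsets j.

Lemma size_subsets : size subsets = (2 ^ n).-1.
Proof. by rewrite -cardE cardC1 -cardsT -powersetT card_powerset cardsT card_ord. Qed.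

Lemma subset_at_neq0 j : j < size subsets -> subset_at j != set0.
Proof. by move=> lt_j; have := mem_nth set0 lt_j; rewrite mem_enum. Qed.

Lemma subset_at_eq i j : i < size subsets -> j < size subsets ->
  (subset_at i == subset_at j) = (i == j).
Proof. by move=> lt_i lt_j; rewrite nth_uniq // enum_uniq. Qed.

Section Chain.
Variable P : nat.

Definition blank : seq {set AP} := nseq P set0.

Fixpoint queries j : seq {set AP} :=
  if j is j'.+1 then queries j' ++ blank ++ [:: query (subset_at j')] else [::].

Definition chain j := queries j ++ blank.

Lemma chainS j : chain j.+1 = chain j ++ query (subset_at j) :: blank.
Proof. by rewrite /chain /= -!catA. Qed.

Lemma size_chain j : size (chain j) = size (queries j) + P.
Proof. by rewrite size_cat size_nseq. Qed.

Lemma size_queriesS j : size (queries j.+1) = size (queries j) + P + 1.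
Proof. by rewrite /= !size_cat size_nseq addnA. Qed.

Lemma chain_prefix j m : j <= m -> exists r, chain m = chain j ++ r.
Proof.
elim: m => [|m IHm]; first by rewrite leqn0 => /eqP ->; exists [::]; rewrite cats0.
rewrite leq_eqVlt => /orP [/eqP -> | /IHm [r chain_m]]; first by exists [::]; rewrite cats0.
by exists (r ++ query (subset_at m) :: blank); rewrite chainS chain_m -catA.
Qed.

Lemma chain_letters j X : X \in chain j ->
  exists2 S, X = query S & S = set0 \/ exists2 i, i < j & S = subset_at i.
Proof.
have blank_query Y : Y \in blank -> Y = query set0.
  by case/nseqP => -> _; rewrite /query imset0.
elim: j => [/blank_query -> | j IHj]; first by exists set0 => //; left.
rewrite chainS mem_cat in_cons.
case/or3P => [/IHj [S -> [-> | [i lt_ij ->]]] | /eqP -> | /blank_query ->].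
- by exists set0 => //; left.
- by exists (subset_at i) => //; right; exists i => //; apply: ltnW.
- by exists (subset_at j) => //; right; exists j.
- by exists set0 => //; left.
Qed.

Lemma query_word_chain j : query_word (chain j).
Proof. by move=> X /chain_letters [S -> _]; exists S. Qed.

Lemma lang_chain_answer j : lang (chain j.+1 ++ [:: answer (subset_at j)]).
Proof.
rewrite chainS -catA /=; set w := _ :: _.
have lt_t : size (chain j) < size (chain j ++ w) by rewrite size_cat addnS ltnS leq_addr.
apply/existsP; exists (Ordinal lt_t); apply/forallP => i /=.
rewrite nth_cat ltnn subnn mem_queryP /occurs_from drop_cat ltnn subnn drop0.
have answer_w : answer (subset_at j) \in w by rewrite !(in_cons, mem_cat) eqxx !orbT.
by case: ifP => Si; apply/hasP; exists (answer (subset_at j));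
  rewrite ?mem_answerC ?mem_answerB ?Si.
Qed.

Lemma notlang_chain_answer j : j < size subsets ->
  ~~ lang (chain j ++ [:: answer (subset_at j)]).
Proof.
move=> lt_j; apply/existsP => -[[t lt_t] /= good].
move: lt_t good; rewrite size_cat addn1 ltnS leq_eqVlt => /orP [/eqP -> | lt_t].
  by move/good_at_answer/eqP; rewrite (negbTE (subset_at_neq0 lt_j)).
have [S xt S_before] := chain_letters (mem_nth set0 lt_t).
move/(good_at_query (@query_word_chain j) lt_t xt)/eqP.
case: S_before => [-> | [i lt_ij ->]].
  by rewrite eq_sym (negbTE (subset_at_neq0 lt_j)).
by rewrite subset_at_eq ?(ltn_trans lt_ij) // (ltn_eqF lt_ij).
Qed.

End Chain.
End Language.

Section LowerBound.
Variables (n : nat) (al : form 'I_(natoms n)).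
Hypotheses (n_gt0 : 0 < n) (past_al : in_LTL_past al).
Hypothesis lang_al : forall s, sat s (Ff al) 0 = lang s.

Local Notation P := (fsize al).

Lemma chain_disagree j K : j < K -> K <= size (subsets n) ->
  ~~ agree al (chain n P K) (size (queries n P j))
              (chain n P K) (size (queries n P j.+1)).
Proof.
move=> lt_jK le_K; apply/negP => ag.
have [r1 chainK1] := chain_prefix n P (ltnW lt_jK).
have [r2 chainK2] := chain_prefix n P lt_jK.
have ydP := ydepth_lt_fsize al.
set w := [:: answer (subset_at n j)].
have ag_w : agree al (queries n P j ++ blank n P ++ w) (size (queries n P j))
                     (queries n P j.+1 ++ blank n P ++ w) (size (queries n P j.+1)).
  rewrite !catA -/(chain n P j) -/(chain n P j.+1).
  rewrite agree_past_cat ?size_chain ?ltn_add2l //.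
  by move: ag; rewrite {1}chainK1 chainK2 agree_past_cat ?size_chain ?ltn_add2l.
have := satF_past_agree past_al _ ag_w; rewrite size_nseq => /(_ (ltnW ydP)).
rewrite !catA -/(chain n P j) -/(chain n P j.+1) !lang_al lang_chain_answer.
rewrite (negbTE (query_word_notlang n_gt0 (@query_word_chain n P j.+1))).
by rewrite (negbTE (notlang_chain_answer _ (leq_trans lt_jK le_K))) => /(_ isT).
Qed.

Lemma lower_bound : 2 ^ n <= fsize (Ff al).
Proof.
have step j : size (queries n P j) <= size (queries n P j.+1).
  by rewrite size_queriesS -addnA leq_addr.
have := disagree_lt_fsize step (fun j lt_j => chain_disagree lt_j (leqnn _)).
by rewrite size_subsets /=; have := expn_gt0 2 n; lia.
Qed.

End LowerBound.

Section UpperBound.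
Variable n : nat.

Definition clause (i : 'I_n) : form 'I_(natoms n) :=
  And (Or (Atom (atP i)) (Ff (Atom (atB i)))) (Or (NAtom (atP i)) (Ff (Atom (atC i)))).

(* The extra clause i0 stands in for the constant true, which the syntax lacks. *)
Definition clauses (i0 : 'I_n) (l : seq 'I_n) : form 'I_(natoms n) :=
  foldr (fun i f => And (clause i) f) (clause i0) l.

Lemma clauses_LTL_F i0 l : in_LTL_F (clauses i0 l).
Proof. by elim: l => //= i l ->. Qed.

Lemma fsize_clauses i0 l : fsize (clauses i0 l) = 10 * size l + 9.
Proof. by elim: l => //= i l ->; lia. Qed.

Lemma sat_clause s i t : sat s (clause i) t =
  if atP i \in nth set0 s t then occurs_from (atC i) s t else occurs_from (atB i) s t.
Proof.
by rewrite -!satF_atom /=; case: (atP i \in _); rewrite ?andbT.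
Qed.

Lemma sat_clauses i0 l s t :
  sat s (clauses i0 l) t = all (fun i => sat s (clause i) t) l && sat s (clause i0) t.
Proof. by elim: l => //= i l ->; rewrite andbA. Qed.

Lemma sat_clauses_enum i0 s t : sat s (clauses i0 (enum 'I_n)) t = good_at s t.
Proof.
rewrite sat_clauses.
apply/andP/forallP => [[/allP all_i _] i | good].
  by rewrite -sat_clause all_i ?mem_enum.
by split; [apply/allP => i _ |]; rewrite sat_clause good.
Qed.

Lemma sat_clauses_lang i0 s : sat s (Ff (clauses i0 (enum 'I_n))) 0 = lang s.
Proof. by apply: eq_existsb => t; exact: sat_clauses_enum. Qed.

End UpperBound.

Theorem theorem2 :
  exists (k : nat -> nat) (L : forall n : nat, seq {set 'I_(k n)} -> Prop),
    (* (i) polynomial-size LTL[F] formulae *)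
    (exists c d : nat, forall n : nat, 1 <= n ->
       exists phi : form 'I_(k n),
         in_LTL_F phi /\ lang_is phi (L n) /\ fsize phi <= c * n ^ d + c)
    /\
    (* (ii) size 2^(Omega(n)): exists rational p/q > 0 and N with
       size psi >= 2^((p/q) n), i.e. 2^(p n) <= size psi ^ q, for n >= N *)
    (exists p q N : nat, 0 < p /\ 0 < q /\
       forall n : nat, N <= n -> 1 <= n ->
         forall psi : form 'I_(k n),
           in_F_past psi -> lang_is psi (L n) -> 2 ^ (p * n) <= fsize psi ^ q).
Proof.
exists natoms, (fun n s => @lang n s); split.
- exists 10, 1 => n n_gt0; exists (Ff (clauses (Ordinal n_gt0) (enum 'I_n))).
  split; first exact: clauses_LTL_F.
  split; first by apply/lang_isF => s; apply: sat_clauses_lang.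
  by rewrite /= fsize_clauses size_enum_ord expn1; lia.
- exists 1, 1, 0; do 2!split => //.
  move=> n _ n_gt0 [] // al past_al /lang_isF lang_al.
  by rewrite mul1n expn1; apply: lower_bound.
Qed.
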